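(* For all distinct $a,b\in\mathbb{B}^2$, \[ h_{\mathbb{B}^2}(a,b)\le\rho_{\mathbb{B}^2}(a,b)\le\frac{h_{\mathbb{B}^2}(a,b)}{\sqrt{1-m^2}}, \] where $m$ is the Euclidean distance from the origin to the line $L[a,b]$ through $a$ and $b$. Equality holds if $m=0$.
   Context: $\mathbb{B}^2$ is the unit disk. Hyperbolic metric: $\mathrm{sh}\frac{\rho_{\mathbb{B}^2}(a,b)}{2}=\frac{|a-b|}{\sqrt{(1-|a|^2)(1-|b|^2)}}$. Hilbert metric: for distinct $a,b$ in a bounded convex domain $G$, let $u,v$ be the intersections of the line through $a,b$ with $\partial G$, ordered $u,a,b,v$ on the line; $h_G(a,b)=\log\frac{|u-b||a-v|}{|u-a||b-v|}$. *)

From Stdlib Require Import Reals Lra.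
Open Scope R_scope.

Definition pt := (R * R)%type.

Definition padd (p q : pt) : pt := (fst p + fst q, snd p + snd q).
Definition psub (p q : pt) : pt := (fst p - fst q, snd p - snd q).
Definition pscale (t : R) (p : pt) : pt := (t * fst p, t * snd p).
Definition dot (p q : pt) : R := fst p * fst q + snd p * snd q.
Definition norm (p : pt) : R := sqrt (dot p p).

Definition in_disk (p : pt) : Prop := norm p < 1.

Definition rho_disk (a b : pt) : R :=
  2 * arcsinh (norm (psub a b) /
               sqrt ((1 - norm a ^ 2) * (1 - norm b ^ 2))).

(* The points with |a + t(b-a)| = 1 are the roots of
   A t^2 + 2 B t + C = 0, with A = |b-a|^2, B = a.(b-a), C = |a|^2 - 1.
   For a, b in the disk with a <> b, C < 0 so the roots are t_u < 0 < 1 < t_v,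
   giving the boundary points u (beyond a) and v (beyond b), ordered u,a,b,v. *)
Definition line_pt (a b : pt) (t : R) : pt := padd a (pscale t (psub b a)).

Definition disk_tu (a b : pt) : R :=
  let A := dot (psub b a) (psub b a) in
  let B := dot a (psub b a) in
  let C := dot a a - 1 in
  (- B - sqrt (B ^ 2 - A * C)) / A.

Definition disk_tv (a b : pt) : R :=
  let A := dot (psub b a) (psub b a) in
  let B := dot a (psub b a) in
  let C := dot a a - 1 in
  (- B + sqrt (B ^ 2 - A * C)) / A.

Definition disk_u (a b : pt) : pt := line_pt a b (disk_tu a b).
Definition disk_v (a b : pt) : pt := line_pt a b (disk_tv a b).

Definition hilbert_disk (a b : pt) : R :=
  let u := disk_u a b in
  let v := disk_v a b in
  ln ((norm (psub u b) * norm (psub a v)) /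
      (norm (psub u a) * norm (psub b v))).

(* Euclidean distance from the origin to the line L[a,b] (a <> b):
   the distance from 0 to the foot of the perpendicular,
   at parameter t0 = - a.(b-a) / |b-a|^2. *)
Definition dist0_line (a b : pt) : R :=
  norm (line_pt a b (- dot a (psub b a) / dot (psub b a) (psub b a))).

(* The boundary points u, v sit at the roots
   t_u < 0 < 1 < t_v of A t^2 + 2 B t + C, where A = |b - a|^2, B = a.(b - a),
   C = |a|^2 - 1, so h is the log of the cross ratio of (t_u, 0, 1, t_v).  Since
   sinh (ln X / 2) = (X - 1) / (2 sqrt X), Vieta's formulas give
   sinh (h/2) = sqrt (B^2 - A C) / sqrt ((1 - |a|^2) (1 - |b|^2)), while
   1 - m^2 = (B^2 - A C) / A; together, sinh (h/2) = sqrt (1 - m^2) sinh (rho/2).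
   With c = sqrt (1 - m^2) in (0, 1], h <= rho follows from the monotonicity of sinh and
   rho <= h / c from the superadditivity k sinh y <= sinh (k y) for k >= 1, y >= 0. *)

From Stdlib Require Import Reals Lra Psatz.
Open Scope R_scope.

Lemma cosh_le x y : 0 <= x <= y -> cosh x <= cosh y.
Proof.
  intros [Hx [Hxy | <-]]; [| lra].
  destruct (MVT_cor2 cosh sinh x y Hxy (fun c _ => derivable_pt_lim_cosh c))
    as [c [Hmvt Hc]].
  assert (0 < sinh c) by (rewrite <- sinh_0; apply sinh_lt; lra).
  nra.
Qed.

Lemma sinh_mul_ge k y : 1 <= k -> 0 <= y -> k * sinh y <= sinh (k * y).
Proof.
  intros Hk [Hy | <-]; [| rewrite Rmult_0_r, sinh_0; lra].
  assert (Hder : forall c, derivable_pt_lim (fun x => sinh (k * x) - k * sinh x) c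
                             (k * cosh (k * c) - k * cosh c)).
  { intros c. apply (derivable_pt_lim_minus (fun x => sinh (k * x)) (fun x => k * sinh x)).
    - rewrite Rmult_comm.
      apply (derivable_pt_lim_comp (fun x => k * x) sinh).
      + pose proof (derivable_pt_lim_scal id k c 1 (derivable_pt_lim_id c)) as Hlin.
        rewrite Rmult_1_r in Hlin. exact Hlin.
      + apply derivable_pt_lim_sinh.
    - apply derivable_pt_lim_scal, derivable_pt_lim_sinh. }
  destruct (MVT_cor2 _ _ 0 y Hy (fun c _ => Hder c)) as [c [Hmvt Hc]].
  assert (cosh c <= cosh (k * c)) by (apply cosh_le; nra).
  rewrite Rmult_0_r, sinh_0, Rmult_0_r in Hmvt.
  assert (0 <= (k * cosh (k * c) - k * cosh c) * (y - 0)) by (apply Rmult_le_pos; nra).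
  lra.
Qed.

Lemma sinh_le x y : x <= y -> sinh x <= sinh y.
Proof. intros [Hxy | <-]; [left; apply sinh_lt, Hxy | lra]. Qed.

Lemma sinh_half_scaled_bounds x y c : 0 < c <= 1 -> 0 <= y ->
  sinh (x / 2) = c * sinh (y / 2) -> x <= y <= x / c.
Proof.
  intros Hc Hy Hxy.
  assert (Hsy : 0 <= sinh (y / 2)) by (rewrite <- sinh_0; apply sinh_le; lra).
  assert (Hle : x <= y).
  { destruct (Rle_or_lt x y) as [H | H]; [exact H|].
    assert (sinh (y / 2) < sinh (x / 2)) by (apply sinh_lt; lra). nra. }
  split; [exact Hle|].
  assert (Hx : 0 <= x).
  { destruct (Rle_or_lt 0 x) as [H | H]; [exact H|].
    assert (Hneg : sinh (x / 2) < sinh 0) by (apply sinh_lt; lra).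
    rewrite sinh_0 in Hneg. nra. }
  assert (Hk : 1 <= / c) by (rewrite <- Rinv_1; apply Rinv_le_contravar; lra).
  pose proof (sinh_mul_ge (/ c) (x / 2) Hk ltac:(lra)) as Hconv.
  destruct (Rle_or_lt y (x / c)) as [H | H]; [exact H|].
  assert (sinh (/ c * (x / 2)) < sinh (y / 2)) by (apply sinh_lt; unfold Rdiv in *; nra).
  rewrite Hxy in Hconv.
  replace (/ c * (c * sinh (y / 2))) with (sinh (y / 2)) in Hconv by (field; lra).
  lra.
Qed.

Lemma sinh_ln x : 0 < x -> sinh (ln x) = (x - / x) / 2.
Proof. intros Hx. unfold sinh. rewrite exp_Ropp, exp_ln by exact Hx. reflexivity. Qed.

Lemma sinh_half_ln x : 0 < x -> sinh (ln x / 2) = (x - 1) / (2 * sqrt x).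
Proof.
  intros Hx.
  assert (Hr : 0 < sqrt x) by (apply sqrt_lt_R0; exact Hx).
  assert (Hln : ln x / 2 = ln (sqrt x)).
  { rewrite <- (sqrt_sqrt x) at 1 by lra. rewrite ln_mult by exact Hr. field. }
  rewrite Hln, sinh_ln by exact Hr.
  replace (x - 1) with (sqrt x * sqrt x - 1) by (rewrite sqrt_sqrt; lra).
  field. lra.
Qed.

Definition cross_ratio (u a b v : R) : R := (b - u) * (v - a) / ((a - u) * (v - b)).

Lemma sinh_half_ln_cross_ratio u a b v : u < a -> a < b -> b < v ->
  sinh (ln (cross_ratio u a b v) / 2)
  = (b - a) * (v - u) / (2 * sqrt ((a - u) * (v - b) * ((b - u) * (v - a)))).
Proof.
  intros Hua Hab Hbv.
  set (p := (a - u) * (v - b)). set (q := (b - u) * (v - a)).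
  assert (Hp : 0 < p) by (apply Rmult_lt_0_compat; lra).
  assert (Hq : 0 < q) by (apply Rmult_lt_0_compat; lra).
  assert (Hsp : 0 < sqrt p) by (apply sqrt_lt_R0; exact Hp).
  assert (Hsq : 0 < sqrt q) by (apply sqrt_lt_R0; exact Hq).
  assert (Hcr : cross_ratio u a b v = q / p) by reflexivity.
  rewrite Hcr, sinh_half_ln by (apply Rdiv_lt_0_compat; lra).
  rewrite sqrt_div_alt, sqrt_mult_alt by lra.
  replace (q / p - 1) with ((b - a) * (v - u) / p) by (unfold p, q; field; lra).
  replace p with (sqrt p * sqrt p) at 1 by (apply sqrt_sqrt; lra).
  field. lra.
Qed.

Definition quad_root_lo (A B C : R) : R := (- B - sqrt (B ^ 2 - A * C)) / A.
Definition quad_root_hi (A B C : R) : R := (- B + sqrt (B ^ 2 - A * C)) / A.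

Section QuadraticRoots.

(* The quadratic [A t^2 + 2 B t + C] is negative at [t = 0] and at [t = 1]. *)
Variables A B C : R.
Hypothesis A_gt0 : 0 < A.
Hypothesis C_lt0 : C < 0.
Hypothesis ABC_lt0 : A + 2 * B + C < 0.

Let s := sqrt (B ^ 2 - A * C).

Let s_gt0 : 0 < s.
Proof. apply sqrt_lt_R0. nra. Qed.

Let s_sq : s ^ 2 = B ^ 2 - A * C.
Proof. apply pow2_sqrt. nra. Qed.

Lemma quad_root_lo_lt0 : quad_root_lo A B C < 0.
Proof.
  pose proof s_gt0. pose proof s_sq.
  apply Rdiv_neg_pos; [fold s; nra | exact A_gt0].
Qed.

Lemma quad_root_hi_gt1 : 1 < quad_root_hi A B C.
Proof.
  pose proof s_gt0. pose proof s_sq.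
  apply (Rmult_lt_reg_r A); [exact A_gt0|].
  unfold quad_root_hi. fold s. field_simplify; [nra | lra].
Qed.

Lemma quad_roots_sum : quad_root_lo A B C + quad_root_hi A B C = - 2 * B / A.
Proof. unfold quad_root_lo, quad_root_hi. field. lra. Qed.

Lemma quad_roots_prod : quad_root_lo A B C * quad_root_hi A B C = C / A.
Proof.
  assert (HC : C = (B ^ 2 - s ^ 2) / A) by (rewrite s_sq; field; lra).
  unfold quad_root_lo, quad_root_hi. fold s. rewrite HC. field. lra.
Qed.

Lemma quad_roots_diff : quad_root_hi A B C - quad_root_lo A B C = 2 * s / A.
Proof. unfold quad_root_lo, quad_root_hi. fold s. field. lra. Qed.

Lemma sinh_half_ln_cross_ratio_quad_roots :
  sinh (ln (cross_ratio (quad_root_lo A B C) 0 1 (quad_root_hi A B C)) / 2)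
  = s / sqrt (C * (A + 2 * B + C)).
Proof.
  pose proof quad_root_lo_lt0. pose proof quad_root_hi_gt1.
  rewrite sinh_half_ln_cross_ratio by lra.
  set (u := quad_root_lo A B C). set (v := quad_root_hi A B C).
  replace ((0 - u) * (v - 1) * ((1 - u) * (v - 0)))
    with (C * (A + 2 * B + C) / A ^ 2).
  2:{ replace ((0 - u) * (v - 1) * ((1 - u) * (v - 0)))
        with (- (u * v) * ((u + v) - u * v - 1)) by ring.
      unfold u, v. rewrite quad_roots_sum, quad_roots_prod. field. lra. }
  rewrite sqrt_div_alt, sqrt_pow2 by (try apply pow_lt; lra).
  replace (v - u) with (2 * s / A) by (symmetry; apply quad_roots_diff).
  field. split; [apply Rgt_not_eq, sqrt_lt_R0; nra | lra].
Qed.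

End QuadraticRoots.

Lemma norm_sq p : norm p ^ 2 = dot p p.
Proof. apply pow2_sqrt. destruct p as [x y]. unfold dot. simpl. nra. Qed.

Lemma in_disk_dot p : in_disk p -> dot p p < 1.
Proof.
  unfold in_disk. intros Hp. rewrite <- norm_sq.
  assert (0 <= norm p) by apply sqrt_pos. nra.
Qed.

Lemma norm_gt0 p : p <> (0, 0) -> 0 < norm p.
Proof.
  destruct p as [x y]. intros Hp. apply sqrt_lt_R0. unfold dot. simpl.
  destruct (Req_dec x 0) as [-> | Hx]; [destruct (Req_dec y 0) as [-> | Hy] |].
  - contradiction.
  - assert (0 < y * y) by (apply Rsqr_pos_lt; exact Hy). nra.
  - assert (0 < x * x) by (apply Rsqr_pos_lt; exact Hx). nra.
Qed.

Lemma norm_psub_gt0 a b : a <> b -> 0 < norm (psub b a).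
Proof.
  intros Hab. apply norm_gt0. intros Hba. apply Hab.
  destruct a, b. unfold psub in Hba. injection Hba as Hx Hy. f_equal; lra.
Qed.

Lemma norm_pscale t p : norm (pscale t p) = Rabs t * norm p.
Proof.
  unfold norm. rewrite <- sqrt_Rsqr_abs, <- sqrt_mult_alt by apply Rle_0_sqr.
  f_equal. destruct p. unfold dot, pscale, Rsqr. simpl. ring.
Qed.

Lemma line_pt_0 a b : line_pt a b 0 = a.
Proof. destruct a, b. unfold line_pt, padd, pscale. simpl. f_equal; ring. Qed.

Lemma line_pt_1 a b : line_pt a b 1 = b.
Proof. destruct a, b. unfold line_pt, padd, pscale, psub. simpl. f_equal; ring. Qed.

Lemma psub_line_pt a b t t' :
  psub (line_pt a b t) (line_pt a b t') = pscale (t - t') (psub b a).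
Proof. destruct a, b. unfold line_pt, padd, pscale, psub. simpl. f_equal; ring. Qed.

Lemma norm_psub_line_pt a b t t' :
  norm (psub (line_pt a b t) (line_pt a b t')) = Rabs (t - t') * norm (psub b a).
Proof. rewrite psub_line_pt. apply norm_pscale. Qed.

Lemma dot_line_pt a b t :
  dot (line_pt a b t) (line_pt a b t)
  = dot a a + 2 * t * dot a (psub b a) + t ^ 2 * dot (psub b a) (psub b a).
Proof. destruct a, b. unfold dot, line_pt, padd, pscale, psub. simpl. ring. Qed.

Lemma hilbert_disk_cross_ratio a b : a <> b -> disk_tu a b < 0 -> 1 < disk_tv a b ->
  hilbert_disk a b = ln (cross_ratio (disk_tu a b) 0 1 (disk_tv a b)).
Proof.
  intros Hab Htu Htv.
  pose proof (norm_psub_gt0 a b Hab) as Hn.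
  unfold hilbert_disk, disk_u, disk_v.
  set (u := disk_tu a b) in *. set (v := disk_tv a b) in *.
  replace (psub (line_pt a b u) b) with (psub (line_pt a b u) (line_pt a b 1))
    by now rewrite line_pt_1.
  replace (psub a (line_pt a b v)) with (psub (line_pt a b 0) (line_pt a b v))
    by now rewrite line_pt_0.
  replace (psub (line_pt a b u) a) with (psub (line_pt a b u) (line_pt a b 0))
    by now rewrite line_pt_0.
  replace (psub b (line_pt a b v)) with (psub (line_pt a b 1) (line_pt a b v))
    by now rewrite line_pt_1.
  rewrite !norm_psub_line_pt, (Rabs_left (u - 1)), (Rabs_left (0 - v)),
    (Rabs_left (u - 0)), (Rabs_left (1 - v)) by lra.
  unfold cross_ratio. f_equal. field. repeat split; lra.
Qed.

Section HilbertVersusHyperbolic.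

Variables a b : pt.
Hypotheses (a_in : in_disk a) (b_in : in_disk b) (a_neq_b : a <> b).

Let A := dot (psub b a) (psub b a).
Let B := dot a (psub b a).
Let C := dot a a - 1.

Let A_gt0 : 0 < A.
Proof. unfold A. rewrite <- norm_sq. apply pow_lt, norm_psub_gt0, a_neq_b. Qed.

Let C_lt0 : C < 0.
Proof. unfold C. pose proof (in_disk_dot a a_in). lra. Qed.

Let dot_b : dot b b = dot a a + 2 * B + A.
Proof. rewrite <- (line_pt_1 a b), dot_line_pt. unfold A, B. ring. Qed.

Let ABC_lt0 : A + 2 * B + C < 0.
Proof. unfold C. pose proof (in_disk_dot b b_in) as Hb. rewrite dot_b in Hb. lra. Qed.

Let disk_factor : (1 - norm a ^ 2) * (1 - norm b ^ 2) = C * (A + 2 * B + C).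
Proof. rewrite !norm_sq, dot_b. unfold C. ring. Qed.

Lemma rho_disk_nonneg : 0 <= rho_disk a b.
Proof.
  unfold rho_disk. rewrite disk_factor.
  apply Rmult_le_pos; [lra|]. rewrite <- arcsinh_0. apply arcsinh_le.
  apply Rle_mult_inv_pos; [apply sqrt_pos | apply sqrt_lt_R0; nra].
Qed.

Lemma one_sub_dist0_line_sq : 1 - dist0_line a b ^ 2 = (B ^ 2 - A * C) / A.
Proof.
  unfold dist0_line. rewrite norm_sq, dot_line_pt. fold A B. unfold C. field. lra.
Qed.

Lemma dist0_line_sq_lt1 : dist0_line a b ^ 2 < 1.
Proof.
  assert (Hpos : 0 < (B ^ 2 - A * C) / A) by (apply Rdiv_lt_0_compat; nra).
  rewrite <- one_sub_dist0_line_sq in Hpos. lra.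
Qed.

Lemma sinh_half_hilbert_disk :
  sinh (hilbert_disk a b / 2) = sqrt (1 - dist0_line a b ^ 2) * sinh (rho_disk a b / 2).
Proof.
  assert (Hlo : quad_root_lo A B C < 0) by (apply quad_root_lo_lt0; assumption).
  assert (Hhi : 1 < quad_root_hi A B C) by (apply quad_root_hi_gt1; assumption).
  rewrite hilbert_disk_cross_ratio; [| exact a_neq_b | exact Hlo | exact Hhi].
  change (disk_tu a b) with (quad_root_lo A B C).
  change (disk_tv a b) with (quad_root_hi A B C).
  rewrite sinh_half_ln_cross_ratio_quad_roots by assumption.
  unfold rho_disk. rewrite Rmult_div_r, sinh_arcsinh by lra.
  rewrite one_sub_dist0_line_sq, sqrt_div_alt by exact A_gt0.
  replace (norm (psub a b)) with (sqrt A).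
  2:{ rewrite <- (line_pt_0 a b) at 1. rewrite <- (line_pt_1 a b) at 2.
      rewrite norm_psub_line_pt, Rabs_left by lra. unfold norm. fold A. ring. }
  rewrite disk_factor.
  assert (0 < sqrt A) by (apply sqrt_lt_R0; exact A_gt0).
  assert (0 < sqrt (C * (A + 2 * B + C))) by (apply sqrt_lt_R0; nra).
  field. lra.
Qed.

End HilbertVersusHyperbolic.

Theorem corollary3p6 (a b : pt) :
  in_disk a -> in_disk b -> a <> b ->
  let m := dist0_line a b in
  hilbert_disk a b <= rho_disk a b /\
  rho_disk a b <= hilbert_disk a b / sqrt (1 - m ^ 2) /\
  (m = 0 -> hilbert_disk a b = rho_disk a b /\
            rho_disk a b = hilbert_disk a b / sqrt (1 - m ^ 2)).
Proof.
  intros Ha Hb Hab m.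
  assert (Hc : 0 < sqrt (1 - m ^ 2) <= 1).
  { pose proof (dist0_line_sq_lt1 a b Ha Hab). pose proof (pow2_ge_0 m).
    split; [apply sqrt_lt_R0; unfold m; lra|].
    rewrite <- sqrt_1 at 2. apply sqrt_le_1_alt. lra. }
  destruct (sinh_half_scaled_bounds _ _ _ Hc (rho_disk_nonneg a b Ha Hb)
              (sinh_half_hilbert_disk a b Ha Hb Hab)) as [Hlo Hhi].
  split; [exact Hlo | split; [exact Hhi|]].
  intros Hm0.
  assert (Hc1 : sqrt (1 - m ^ 2) = 1).
  { rewrite Hm0. replace (1 - 0 ^ 2) with 1 by ring. exact sqrt_1. }
  rewrite Hc1, Rdiv_1_r in *. split; lra.
Qed.
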